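(* Let $d\ge3$ be odd and $n>2$. Then the following statement is false: ''for every $A\in\mathrm{Hull}(\Lambda_{d-1}(d,n))$ we have $\operatorname{Per}(A)\ge(n!/n^n)^{d-1}$, with equality if and only if $A=n^{1-d}J_n^d$.'' That is, there exists $A\in\mathrm{Hull}(\Lambda_{d-1}(d,n))$ such that either $\operatorname{Per}(A)<(n!/n^n)^{d-1}$, or $\operatorname{Per}(A)=(n!/n^n)^{d-1}$ and $A\ne n^{1-d}J_n^d$.
   Context: Let $I_n=\{1,\dots,n\}$. A $d$-dimensional matrix of order $n$ is a function $I_n^d\to\mathbb R$. A $(d-1)$-plane (hyperplane) is the set of positions with one coordinate fixed. $\Lambda_{d-1}(d,n)$ is the set of $(0,1)$-valued $d$-dimensional matrices of order $n$ with exactly one $1$ in each hyperplane. $\mathrm{Hull}(X)$ denotes the convex hull of $X$. A diagonal is a selection of $n$ positions any two of which differ in every coordinate; $\operatorname{Per}(A)$ is the sum over diagonals of the product of the entries on the diagonal. $J_n^d$ is the $d$-dimensional matrix of order $n$ with all entries $1$. *)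

From HB Require Import structures.
From mathcomp Require Import all_boot all_order all_algebra.
From mathcomp Require Import reals.
Set Implicit Arguments. Unset Strict Implicit. Unset Printing Implicit Defensive.
Import Order.TTheory GRing.Theory Num.Theory.
Local Open Scope ring_scope.

Definition pos (d n : nat) := {ffun 'I_d -> 'I_n}.

Definition dmatrix (R : Type) (d n : nat) := pos d n -> R.

Definition hyperplane (d n : nat) (k : 'I_d) (v : 'I_n) : {set pos d n} :=
  [set x : pos d n | x k == v].

Definition in_Lambda (R : realType) (d n : nat) (A : dmatrix R d n) : Prop :=
  (forall x, A x = 0 \/ A x = 1) /\
  (forall (k : 'I_d) (v : 'I_n),
      #|[set x in hyperplane k v | A x == 1]| = 1%N).

Definition in_Hull_Lambda (R : realType) (d n : nat) (A : dmatrix R d n) : Prop :=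
  exists (m : nat) (w : 'I_m -> R) (B : 'I_m -> dmatrix R d n),
    (forall i, 0 <= w i) /\ (\sum_(i < m) w i = 1) /\
    (forall i, in_Lambda (B i)) /\
    (forall x, A x = \sum_(i < m) w i * B i x).

Definition is_diagonal (d n : nat) (D : {set pos d n}) : bool :=
  (#|D| == n) &&
  [forall x in D, forall y in D, (x != y) ==> [forall k : 'I_d, x k != y k]].

Definition Per (R : realType) (d n : nat) (A : dmatrix R d n) : R :=
  \sum_(D : {set pos d n} | is_diagonal D) \prod_(x in D) A x.

Definition scaledJ (R : realType) (d n : nat) : dmatrix R d n :=
  fun _ => ((n%:R : R) ^+ d.-1)^-1.

From HB Require Import structures.
From mathcomp Require Import all_boot all_order all_algebra.
From mathcomp Require Import reals.
From mathcomp Require Import perm lra.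
Import Order.TTheory GRing.Theory Num.Theory.
Local Open Scope ring_scope.
Set Implicit Arguments. Unset Strict Implicit. Unset Printing Implicit Defensive.

(* Let c = n^(1-d) and let E be the matrix equal to (-1)^|x| at the vertices x
   of the cube {0,1}^d and to 0 elsewhere.  With t = (2n)^(-d), both c J + t E
   and c J - t E lie in the hull: c J is the average of all translates of a
   matrix of Lambda, and t E is a signed average of matrices of Lambda through
   the vertices whose other points cancel.  A diagonal meets the cube in at most
   two points, which are then antipodal and, d being odd, carry opposite signs;
   so prod (c + a) + prod (c - a) <= 2 c^n along every diagonal, for a = t E.
   Summing over the at most (n!)^(d-1) diagonals gives
   Per (c J + t E) + Per (c J - t E) <= 2 (n!/n^n)^(d-1), so one of the two has
   permanent at most the bound while differing from c J. *)

Lemma in_Hull_Lambda_fin (R : realType) (d n : nat) (I : finType) (w : I -> R)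
    (B : I -> dmatrix R d n) (A : dmatrix R d n) :
  (forall i, 0 <= w i) -> \sum_i w i = 1 -> (forall i, in_Lambda (B i)) ->
  (forall y, A y = \sum_i w i * B i y) -> in_Hull_Lambda A.
Proof.
move=> w_ge0 w_sum1 B_Lambda AE.
exists #|I|, (w \o enum_val), (B \o enum_val); split; last split; last split.
- by move=> j; apply: w_ge0.
- by rewrite -w_sum1 (big_enum_val (A:=I) w).
- by move=> j; apply: B_Lambda.
- by move=> y; rewrite AE (big_enum_val (A:=I) (fun i => w i * B i y)).
Qed.

Section LineMatrices.
Variables (R : realType) (d n : nat).
Implicit Types (f : 'I_d -> 'I_n -> 'I_n) (y : pos d n).

Definition line_pos f (i : 'I_n) : pos d n := [ffun k => f k i].

Definition line_mx f : dmatrix R d n :=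
  fun y => (y \in [set line_pos f i | i in 'I_n])%:R.

Lemma line_mx_in_Lambda f : (forall k, injective (f k)) -> in_Lambda (line_mx f).
Proof.
move=> f_inj; split=> [y|k v]; first by rewrite /line_mx; case: (_ \in _); [right|left].
apply/eqP/cards1P; exists (line_pos f (invF (f_inj k) v)); apply/setP => y.
rewrite !inE /line_mx pnatr_eq1 eqb1; apply/andP/eqP => [[/eqP yk /imsetP [i _ yE]]|->].
  by rewrite yE; congr line_pos; apply: (f_inj k); rewrite f_invF -yk yE ffunE.
by rewrite ffunE f_invF imset_f.
Qed.

Lemma line_mxE f (k0 : 'I_d) y :
  injective (f k0) -> line_mx f y = \sum_i (y == line_pos f i)%:R.
Proof.
move=> f_inj; rewrite /line_mx; case: (boolP (y \in _)) => [/imsetP [i _ ->]|y_off].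
  rewrite (bigD1 i) //= eqxx big1 ?addr0 // => j ji.
  case: eqP => // /(congr1 (fun p : pos d n => p k0)); rewrite !ffunE => /f_inj ij.
  by rewrite ij eqxx in ji.
by rewrite big1 // => i _; case: eqP => // yE; rewrite yE imset_f in y_off.
Qed.

Lemma eq_line_mx f g : (forall k i, f k i = g k i) -> line_mx f =1 line_mx g.
Proof.
move=> fg y; rewrite /line_mx (@eq_imset _ _ (line_pos f) (line_pos g)) // => i.
by apply/ffunP => k; rewrite !ffunE fg.
Qed.

End LineMatrices.

Lemma sum_line_mx_shift (R : realType) (d n : nat) (f : 'I_d -> 'I_n.+1 -> 'I_n.+1)
    (k0 : 'I_d) (y : pos d n.+1) :
  injective (f k0) ->
  \sum_(c : {ffun 'I_d -> 'I_n.+1}) line_mx R (fun k i => f k i + c k) y = n.+1%:R.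
Proof.
move=> f_inj; have shift_inj c : injective (fun i => f k0 i + c k0).
  by move=> i j /addIr /f_inj.
under eq_bigr => c _ do rewrite (line_mxE _ _ (shift_inj c)).
rewrite exchange_big /= -[n.+1 in RHS]card_ord -sumr_const; apply: eq_bigr => i _.
pose c0 : {ffun 'I_d -> 'I_n.+1} := [ffun k => y k - f k i].
rewrite (bigD1 c0) //= big1 => [|c cc0].
  suff -> : y == line_pos (fun k j => f k j + c0 k) i by rewrite addr0.
  by apply/eqP/ffunP => k; rewrite !ffunE addrC subrK.
have [yE|] := eqVneq y; last by [].
case/eqP: cc0; apply/ffunP => k.
by rewrite !ffunE yE ffunE addrC addKr.
Qed.

Section Diagonals.
Variables d n : nat.
Implicit Types D : {set pos d n}.

Lemma diagonal_card D : is_diagonal D -> #|D| = n.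
Proof. by case/andP => /eqP. Qed.

Lemma diagonal_neq D x y (k : 'I_d) :
  is_diagonal D -> x \in D -> y \in D -> x != y -> x k != y k.
Proof.
case/andP=> _ /forall_inP /(_ x) diagD xD yD xy.
by move/forall_inP/(_ y yD)/implyP/(_ xy)/forallP: (diagD xD).
Qed.

Lemma diagonal_inj D (k : 'I_d) :
  is_diagonal D -> {in D &, injective (fun x : pos d n => x k)}.
Proof.
by move=> diagD x y xD yD; apply: contra_eq; apply: diagonal_neq diagD xD yD.
Qed.

Lemma diagonal_onto D (k : 'I_d) (i : 'I_n) :
  is_diagonal D -> exists2 y, y \in D & y k = i.
Proof.
move=> diagD; have /eqP onto : [set (y : pos d n) k | y in D] == [set: 'I_n].
  rewrite eqEcard subsetT cardsT card_ord card_in_imset ?diagonal_card ?leqnn //.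
  exact: diagonal_inj.
have : i \in [set (y : pos d n) k | y in D] by rewrite onto inE.
by case/imsetP => y yD ->; exists y.
Qed.

End Diagonals.

Section CountDiagonals.
Variables d n : nat.

(* The point of a diagonal with first coordinate i has its other coordinates
   given by d injections of i, so there are at most (n!)^d diagonals. *)
Definition diagonal_perms (D : {set pos d.+1 n}) : {ffun 'I_d -> {ffun 'I_n -> 'I_n}} :=
  [ffun k => [ffun i => odflt i (omap (fun y : pos d.+1 n => y (lift ord0 k))
                                       [pick y in D | y ord0 == i])]].

Lemma diagonal_permsE D y k :
  is_diagonal D -> y \in D -> diagonal_perms D k (y ord0) = y (lift ord0 k).
Proof.
move=> diagD yD; rewrite !ffunE; case: pickP => [z /andP [zD /eqP zy]|/(_ y)] /=.
  by rewrite (diagonal_inj diagD zD yD zy).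
by rewrite yD eqxx.
Qed.

Lemma diagonal_perms_inj :
  {in [pred D | is_diagonal D] &, injective diagonal_perms}.
Proof.
suff sub D1 D2 : is_diagonal D1 -> is_diagonal D2 ->
    diagonal_perms D1 = diagonal_perms D2 -> D1 \subset D2.
  by move=> D1 D2 diag1 diag2 eqD; apply/eqP; rewrite eqEsubset !sub.
move=> diag1 diag2 eqD; apply/subsetP => y yD1.
have [z zD2 zy] := diagonal_onto ord0 (y ord0) diag2.
suff -> : y = z by [].
apply/ffunP => j; case: (unliftP ord0 j) => [k ->|->]; last by rewrite zy.
by rewrite -(diagonal_permsE k diag1 yD1) eqD -zy (diagonal_permsE k diag2 zD2).
Qed.

Lemma card_diagonals_le :
  (#|[set D : {set pos d.+1 n} | is_diagonal D]| <= n`! ^ d)%N.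
Proof.
rewrite -(card_in_imset (f := diagonal_perms)); last first.
  by move=> D1 D2; rewrite !inE; apply: diagonal_perms_inj.
have injective_codes : [set diagonal_perms D | D in [set D | is_diagonal D]]
    \subset ffun_on [set g : {ffun 'I_n -> 'I_n} | injectiveb g].
  apply/subsetP => g /imsetP [D]; rewrite inE => diagD ->.
  apply/ffun_onP => k; rewrite inE; apply/injectiveP => i1 i2.
  have [y1 y1D <-] := diagonal_onto ord0 i1 diagD.
  have [y2 y2D <-] := diagonal_onto ord0 i2 diagD.
  by rewrite !diagonal_permsE // => /(diagonal_inj diagD y1D y2D) ->.
apply: leq_trans (subset_leq_card injective_codes) _.
by rewrite card_ffun_on card_inj_ffuns !card_ord ffactnn.
Qed.

End CountDiagonals.

Lemma sum_involution_opp (R : numDomainType) (T : finType) (f : T -> T) (g : T -> R) :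
  involutive f -> (forall t, g (f t) = - g t) -> \sum_t g t = 0.
Proof.
move=> fK gf; have sum_opp : \sum_t g t = - \sum_t g t.
  by rewrite {1}(reindex_inj (inv_inj fK)) -sumrN; apply: eq_bigr => t _.
by apply/eqP; rewrite -[_ == 0](mulrn_eq0 _ 2) mulr2n {1}sum_opp addNr.
Qed.

Section CubeSign.
Variables (R : numDomainType) (d : nat).
Implicit Types x : {ffun 'I_d -> bool}.

Definition cube_sgn x : R := \prod_k (if x k then -1 else 1).

Definition cube_flip (j : 'I_d) x : {ffun 'I_d -> bool} :=
  [ffun k => if k == j then ~~ x k else x k].

Lemma cube_flipK j : involutive (cube_flip j).
Proof. by move=> x; apply/ffunP => k; rewrite !ffunE; case: eqP; rewrite ?negbK. Qed.

Lemma cube_sgn_flip j x : cube_sgn (cube_flip j x) = - cube_sgn x.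
Proof.
rewrite /cube_sgn (bigD1 j) // [in RHS](bigD1 j) //= ffunE eqxx.
under eq_bigr => k kj do rewrite ffunE (negbTE kj).
by case: (x j); rewrite /= ?mulN1r ?mul1r ?opprK.
Qed.

Lemma sum_cube_sgn (j : 'I_d) : \sum_x cube_sgn x = 0.
Proof. exact: (sum_involution_opp (cube_flipK j) (cube_sgn_flip j)). Qed.

Lemma normr_cube_sgn x : `|cube_sgn x| = 1.
Proof.
by rewrite normr_prod big1 // => k _; case: (x k); rewrite ?normrN normr1.
Qed.

Lemma cube_sgn_compl x : odd d -> cube_sgn [ffun k => ~~ x k] = - cube_sgn x.
Proof.
move=> odd_d; rewrite /cube_sgn.
rewrite (eq_bigr (fun k => - (if x k then -1 else 1))) => [|k _].
  by rewrite prodrN cardT size_enum_ord -signr_odd odd_d mulN1r.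
by rewrite ffunE; case: (x k); rewrite ?opprK.
Qed.

End CubeSign.

Lemma prod_add_sub_card_le2 (R : realDomainType) (T : finType) (Q : {set T})
    (a : T -> R) (c : R) :
  (#|Q| <= 2)%N -> {in Q &, forall y1 y2, y1 != y2 -> a y1 * a y2 <= 0} ->
  \prod_(y in Q) (c + a y) + \prod_(y in Q) (c - a y) <= 2 * c ^+ #|Q|.
Proof.
case: (leqP #|Q| 1) => [Q_le1 _ | Q_gt1 Q_le2 a_opp].
  move: Q_le1; rewrite leq_eqVlt ltnS leqn0 cards_eq0 => /orP [/cards1P [y ->] | /eqP ->].
    by rewrite !big_set1 cards1; lra.
  by rewrite !big_set0 cards0; lra.
have /cards2P [y1 [y2 [y12 QE]]] : #|Q| == 2 by rewrite eqn_leq Q_le2.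
have a12 : a y1 * a y2 <= 0 by apply: (a_opp _ _ _ _ y12); rewrite QE !inE eqxx ?orbT.
by rewrite QE cards2 y12 !big_setU1 ?inE // !big_set1 /=; nra.
Qed.

Lemma prod_add_sub_le (R : realDomainType) (T : finType) (D : {set T})
    (a : T -> R) (c : R) :
  0 <= c -> (#|[set y in D | a y != 0%R]| <= 2)%N ->
  {in D &, forall y1 y2, y1 != y2 -> a y1 * a y2 <= 0} ->
  \prod_(y in D) (c + a y) + \prod_(y in D) (c - a y) <= 2 * c ^+ #|D|.
Proof.
set Q := [set y in D | a y != 0] => c_ge0 Q_le2 a_opp.
have DQ : D :&: Q = Q by apply/setIidPr/subsetP => y; rewrite inE => /andP [].
have off_Q (F : T -> R) : (forall y, a y = 0 -> F y = c) ->
    \prod_(y in D :\: Q) F y = c ^+ #|D :\: Q|.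
  move=> Fc; rewrite -prodr_const; apply: eq_bigr => y; rewrite !inE => /andP [yQ yD].
  by apply: Fc; apply/eqP; move: yQ; rewrite yD negbK.
rewrite (big_setID Q) [\prod_(y in D) _](big_setID Q) /= DQ.
rewrite !off_Q => [|y ->|y ->]; rewrite ?addr0 ?subr0 //.
rewrite -[X in _ <= 2 * c ^+ X](cardsID Q) DQ exprD mulrA -mulrDl.
apply: ler_wpM2r; first exact: exprn_ge0.
by apply: prod_add_sub_card_le2 => //; apply: sub_in2 a_opp => y; rewrite inE => /andP [].
Qed.

Section SignedCube.
Variables (R : realType) (d n : nat) (v0 v1 : 'I_n).
Implicit Types (x : {ffun 'I_d -> bool}) (y : pos d n).

Definition cube_vertex x : pos d n := [ffun k => if x k then v1 else v0].

Definition cube_mx : dmatrix R d n :=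
  fun y => \sum_x cube_sgn R x * (y == cube_vertex x)%:R.

Lemma cube_vertex_inj : v0 != v1 -> injective cube_vertex.
Proof.
move=> v01 x x' /ffunP vx; apply/ffunP => k; have := vx k; rewrite !ffunE.
by case: (x k) (x' k) => -[] // v_eq; rewrite v_eq eqxx in v01.
Qed.

Lemma cube_mxE x : v0 != v1 -> cube_mx (cube_vertex x) = cube_sgn R x.
Proof.
move=> v01; rewrite /cube_mx (bigD1 x) //= eqxx mulr1 big1 ?addr0 // => x' x'x.
by rewrite (inj_eq (cube_vertex_inj v01)) eq_sym (negbTE x'x) mulr0.
Qed.

Lemma cube_mx_supp y : cube_mx y != 0 -> exists x, y = cube_vertex x.
Proof.
case: (pickP (fun x => y == cube_vertex x)) => [x /eqP -> | no_vertex] nz.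
  by exists x.
by case/eqP: nz; rewrite /cube_mx big1 // => x _; rewrite no_vertex mulr0.
Qed.

Lemma card_diagonal_cube_supp (k0 : 'I_d) (D : {set pos d n}) :
  is_diagonal D -> (#|[set y in D | cube_mx y != 0%R]| <= 2)%N.
Proof.
move=> diagD; rewrite -(card_in_imset (f := fun y : pos d n => y k0)); last first.
  by move=> y1 y2; rewrite !inE => /andP [y1D _] /andP [y2D _]; apply: (diagonal_inj diagD).
apply: leq_trans (subset_leq_card (_ : _ \subset [set v0; v1])) _; last first.
  by rewrite cards2; case: (v0 != v1).
apply/subsetP => i /imsetP [y]; rewrite !inE => /andP [_ /cube_mx_supp [x ->]] ->.
by rewrite ffunE; case: (x k0); rewrite eqxx ?orbT.
Qed.

(* Two vertices on a diagonal are antipodal, hence of opposite signs for odd d. *)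
Lemma diagonal_cube_mx_mul_le0 (D : {set pos d n}) : odd d -> v0 != v1 -> is_diagonal D ->
  {in D &, forall y1 y2, y1 != y2 -> cube_mx y1 * cube_mx y2 <= 0}.
Proof.
move=> odd_d v01 diagD y1 y2 y1D y2D y12.
have [-> | /cube_mx_supp [x1 y1E]] := eqVneq (cube_mx y1) 0; first by rewrite mul0r.
have [-> | /cube_mx_supp [x2 y2E]] := eqVneq (cube_mx y2) 0; first by rewrite mulr0.
have x2E : x2 = [ffun k => ~~ x1 k].
  apply/ffunP => k; have := diagonal_neq k diagD y1D y2D y12.
  by rewrite y1E y2E !ffunE; case: (x1 k); case: (x2 k); rewrite ?eqxx.
by rewrite y1E y2E !cube_mxE // x2E cube_sgn_compl // mulrN -expr2 oppr_le0 sqr_ge0.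
Qed.

Variables (sigma : 'I_d -> bool -> 'I_n -> 'I_n) (i0 : 'I_n) (pivot : 'I_n -> 'I_d).
Hypotheses (sigma_inj : forall k b, injective (sigma k b))
  (sigma_i0 : forall k b, sigma k b i0 = if b then v1 else v0)
  (sigma_pivot : forall i, i != i0 -> sigma (pivot i) true i = sigma (pivot i) false i).

(* For i != i0, flipping coordinate (pivot i) of x changes the sign but not the
   i-th point of the line, so only the points i0, i.e. the vertices, survive. *)
Lemma sum_cube_sgn_line_mx (k0 : 'I_d) y :
  \sum_x cube_sgn R x * line_mx R (fun k => sigma k (x k)) y = cube_mx y.
Proof.
under eq_bigr => x _ do
  rewrite (line_mxE R (f := fun k => sigma k (x k)) y (@sigma_inj k0 (x k0))) mulr_sumr.
rewrite exchange_big (bigD1 i0) //= [X in _ + X]big1 ?addr0 => [|i i_ne0].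
  apply: eq_bigr => x _; congr (_ * (y == _)%:R).
  by apply/ffunP => k; rewrite !ffunE sigma_i0.
apply: (sum_involution_opp (cube_flipK (pivot i))) => x.
rewrite cube_sgn_flip mulNr; congr (- (_ * (y == _)%:R)).
apply/ffunP => k; rewrite !ffunE; case: eqP => [->|//].
by case: (x _); rewrite /= sigma_pivot.
Qed.

End SignedCube.

Section Perturbation.
Variables (R : realType) (d n : nat).
Implicit Types (x : {ffun 'I_d.+2 -> bool}) (y : pos d.+2 n.+3).

Definition cube_perm (k : 'I_d.+2) (b : bool) : {perm 'I_n.+3} :=
  let s01 := tperm (0 : 'I_n.+3) 1 in let s12 := tperm (1 : 'I_n.+3) 2 in
  if k == 0 then (if b then s12 * s01 else s12)%g else (if b then s01 else 1)%g.

Definition cube_pivot (i : 'I_n.+3) : 'I_d.+2 := if i == 2 then 1 else 0.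

Lemma cube_perm0 k b : cube_perm k b 0 = if b then 1 else 0.
Proof.
have fix0 : tperm (1 : 'I_n.+3) 2 0 = 0 by rewrite tpermD.
by rewrite /cube_perm; case: (k == 0); case: b; rewrite ?permM ?perm1 ?fix0 ?tpermL.
Qed.

Lemma cube_perm_pivot i :
  i != 0 -> cube_perm (cube_pivot i) true i = cube_perm (cube_pivot i) false i.
Proof.
move=> i_ne0; rewrite /cube_perm /cube_pivot; case: (eqVneq i 2) => [->|i_ne2] /=.
  by rewrite perm1 tpermD.
rewrite permM; case: (eqVneq i 1) => [->|i_ne1]; first by rewrite tpermL tpermD.
by rewrite !tpermD // eq_sym.
Qed.

Local Notation vertex := (cube_vertex (d := d.+2) (0 : 'I_n.+3) 1).
Local Notation E := (cube_mx R (d := d.+2) (0 : 'I_n.+3) 1).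

Lemma sum_cube_sgn_cube_perm y :
  \sum_x cube_sgn R x * line_mx R (fun k => cube_perm k (x k)) y = E y.
Proof.
apply: (@sum_cube_sgn_line_mx R d.+2 n.+3 0 1 (fun k b => cube_perm k b) 0 cube_pivot
  _ _ _ 0) => [k b|k b|i].
- exact: perm_inj.
- exact: cube_perm0.
- exact: cube_perm_pivot.
Qed.

Definition cube_weight : R := ((2 ^ d.+2 * n.+3 ^ d.+2)%N%:R)^-1.

Definition perturbed (s : R) : dmatrix R d.+2 n.+3 :=
  fun y => @scaledJ R d.+2 n.+3 y + s * cube_weight * E y.

Lemma cube_weight_gt0 : 0 < cube_weight.
Proof. by rewrite invr_gt0 ltr0n muln_gt0 !expn_gt0. Qed.

Lemma cube_weightE : cube_weight * (2 ^ d.+2 * n.+3)%N%:R = ((n.+3)%:R ^+ d.+1)^-1.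
Proof.
rewrite /cube_weight [in LHS](expnS n.+3) mulnA natrM invfM mulrAC mulVf ?mul1r ?natrX //.
by rewrite pnatr_eq0 muln_eq0 negb_or expn_eq0.
Qed.

Definition cube_line x (c : {ffun 'I_d.+2 -> 'I_n.+3}) : dmatrix R d.+2 n.+3 :=
  line_mx R (fun k i => cube_perm k (x k) i + c k).

Definition cube_coef (s : R) x (c : {ffun 'I_d.+2 -> 'I_n.+3}) : R :=
  cube_weight * (1 + s * cube_sgn R x * (c == [ffun => 0])%:R).

Lemma cube_line_in_Lambda x c : in_Lambda (cube_line x c).
Proof. by apply: line_mx_in_Lambda => k i j /addIr /perm_inj. Qed.

Lemma cube_coef_ge0 (s : R) x c : `|s| <= 1 -> 0 <= cube_coef s x c.
Proof.
move=> s_le1; rewrite mulr_ge0 ?(ltW cube_weight_gt0) //; set t := _ * _%:R.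
have : `|t| <= 1.
  rewrite !normrM normr_cube_sgn mulr1.
  by case: eqP; rewrite ?normr1 ?normr0 ?mulr1 ?mulr0.
by rewrite ler_norml => /andP [t_ge _]; lra.
Qed.

Lemma sum_cube_coefM (s : R) x (G : {ffun 'I_d.+2 -> 'I_n.+3} -> R) :
  \sum_c cube_coef s x c * G c =
    cube_weight * (\sum_c G c + s * cube_sgn R x * G [ffun => 0]).
Proof.
under eq_bigr do rewrite -mulrA mulrDl mul1r.
rewrite -mulr_sumr big_split /=; congr (_ * (_ + _)).
rewrite (bigD1 [ffun => 0]) //= eqxx mulr1 big1 ?addr0 // => c /negbTE ->.
by rewrite mulr0 mul0r.
Qed.

Lemma sum_cube_coef (s : R) : \sum_x \sum_c cube_coef s x c = 1.
Proof.
under eq_bigr => x _ do under eq_bigr => c _ do rewrite -[cube_coef _ _ _]mulr1.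
under eq_bigr => x _ do rewrite sum_cube_coefM mulr1.
rewrite -mulr_sumr big_split /= -mulr_sumr (sum_cube_sgn R 0) mulr0 addr0.
rewrite !sumr_const !card_ffun card_bool !card_ord -mulr_natr -natrM mulnC.
by rewrite /cube_weight mulVf // pnatr_eq0 muln_eq0 negb_or !expn_eq0.
Qed.

(* Averaging over all translations c gives n^(1-d) J; the terms c = 0, weighted
   by signs, give E. *)
Lemma perturbedE (s : R) y :
  perturbed s y = \sum_x \sum_c cube_coef s x c * cube_line x c y.
Proof.
under eq_bigr => x _.
  rewrite sum_cube_coefM (sum_line_mx_shift R (f := fun k => cube_perm k (x k)) (k0 := 0) y
    (@perm_inj _ _)) /cube_line.
  rewrite (@eq_line_mx _ _ _ _ (fun k => cube_perm k (x k))) => [|k i]; last first.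
    by rewrite (ffunE (fun=> 0 : 'I_n.+3)) addr0.
  rewrite -mulrA; over.
rewrite -mulr_sumr big_split /= -mulr_sumr sum_cube_sgn_cube_perm sumr_const card_ffun.
rewrite card_bool card_ord -[_ *+ _]mulr_natr -natrM mulnC mulrDr cube_weightE.
by rewrite /perturbed /scaledJ mulrCA mulrA.
Qed.

Lemma perturbed_in_Hull (s : R) : `|s| <= 1 -> in_Hull_Lambda (perturbed s).
Proof.
move=> s_le1; apply: (@in_Hull_Lambda_fin _ _ _ _
  (fun p => cube_coef s p.1 p.2) (fun p => cube_line p.1 p.2)) => [[x c]|||y] /=.
- exact: cube_coef_ge0.
- by rewrite -(pair_bigA _ (cube_coef s)) sum_cube_coef.
- by move=> [x c]; apply: cube_line_in_Lambda.
- by rewrite perturbedE pair_bigA.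
Qed.

Lemma perturbed_prod_le (s : R) (D : {set pos d.+2 n.+3}) :
  odd d.+2 -> is_diagonal D ->
  \prod_(y in D) perturbed s y + \prod_(y in D) perturbed (- s) y <=
    2 * ((n.+3)%:R ^+ d.+1)^-1 ^+ n.+3.
Proof.
move=> odd_d diagD; pose a y := s * cube_weight * E y.
rewrite -[X in _ <= _ * _ ^+ X](diagonal_card diagD).
under eq_bigr do rewrite /perturbed /scaledJ -/(a _).
under [X in _ + X <= _]eq_bigr do rewrite /perturbed /scaledJ !mulNr -/(a _).
apply: prod_add_sub_le; first by rewrite invr_ge0 exprn_ge0 ?ler0n.
  apply: leq_trans (card_diagonal_cube_supp R 0 1 0 diagD).
  apply/subset_leq_card/subsetP => y; rewrite !inE /a => /andP [-> /=].
  by apply: contraNneq => ->; rewrite mulr0.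
move=> y1 y2 y1D y2D y12; rewrite /a mulrACA mulr_ge0_le0 ?sqr_ge0 //.
exact: (diagonal_cube_mx_mul_le0 R (v0 := 0) (v1 := 1) odd_d isT diagD).
Qed.

Lemma Per_perturbed_le (s : R) : odd d.+2 ->
  Per (perturbed s) + Per (perturbed (- s)) <=
    2 * ((n.+3)`!%:R / (n.+3 ^ n.+3)%:R) ^+ d.+1.
Proof.
move=> odd_d; rewrite /Per -big_split /=.
apply: le_trans (ler_sum _ (fun D diagD => perturbed_prod_le s odd_d diagD)) _.
rewrite (eq_bigl [in [set D | is_diagonal D]]) => [|D]; last by rewrite inE.
rewrite sumr_const -mulrnAr ler_wpM2l // -mulr_natr.
have -> : ((n.+3)`!%:R / (n.+3 ^ n.+3)%:R) ^+ d.+1 =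
    ((n.+3)%:R ^+ d.+1)^-1 ^+ n.+3 * ((n.+3)`! ^ d.+1)%:R :> R.
  by rewrite expr_div_n !natrX -!exprVn -!exprM mulnC mulrC.
by rewrite ler_wpM2l ?exprn_ge0 ?invr_ge0 ?exprn_ge0 ?ler0n // ler_nat card_diagonals_le.
Qed.

Lemma perturbed_neq_scaledJ (s : R) : s != 0 -> perturbed s <> @scaledJ R d.+2 n.+3.
Proof.
move=> s_ne0 /(congr1 (fun A => A (vertex [ffun => false]))).
rewrite /perturbed cube_mxE // /cube_sgn big1 => [|k _]; last by rewrite ffunE.
move/eqP; rewrite -subr_eq0 addrAC subrr add0r mulr1 mulf_eq0 (negbTE s_ne0).
by rewrite gt_eqF ?cube_weight_gt0.
Qed.

End Perturbation.

Theorem theorem3p8 (R : realType) (d n : nat) :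
  (3 <= d)%N -> odd d -> (2 < n)%N ->
  exists A : dmatrix R d n,
    in_Hull_Lambda A /\
    (Per A < ((n`!)%:R / (n ^ n)%:R) ^+ d.-1 \/
     (Per A = ((n`!)%:R / (n ^ n)%:R) ^+ d.-1 /\ A <> @scaledJ R d n)).
Proof.
case: d => [|[|[|d]]] // _ odd_d; case: n => [|[|[|n]]] // _ /=.
pose X s : dmatrix R d.+3 n.+3 := perturbed s.
set b := (_ / _) ^+ _.
have Per_le : Per (X 1) + Per (X (-1)) <= 2 * b := Per_perturbed_le n 1 odd_d.
have [Per1_le|Per1_gt] := lerP (Per (X 1)) b.
  exists (X 1); split; first by apply: perturbed_in_Hull; rewrite normr1.
  move: Per1_le; rewrite le_eqVlt => /orP [/eqP Per1_eq|]; last by left.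
  by right; split; last by apply: perturbed_neq_scaledJ; rewrite oner_eq0.
exists (X (-1)); split; first by apply: perturbed_in_Hull; rewrite normrN normr1.
by left; lra.
Qed.
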